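(* There are infinitely many positive integers $N$ for which there are no antipalindromic numbers $A,B$ (in base $2$) with $N=A/B$.
   Context: A positive integer $n$ is antipalindromic if its binary representation $w=w_1\cdots w_L$ (most significant digit first, no leading zeros) has even length $L$ and satisfies $w_i+w_{L+1-i}=1$ for all $i$. *)

From mathcomp Require Import all_boot.
Set Implicit Arguments. Unset Strict Implicit. Unset Printing Implicit Defensive.

(* Binary digits of n, most significant digit first, no leading zeros
   (empty for n = 0). *)
Fixpoint bin_lsb_aux (fuel n : nat) : seq nat :=
  match fuel with
  | 0 => [::]
  | f.+1 => if n == 0 then [::] else (n %% 2) :: bin_lsb_aux f (n %/ 2)
  end.

Definition binary (n : nat) : seq nat := rev (bin_lsb_aux n n).

(* w = w_1 ... w_L (1-indexed in the paper; 0-indexed here):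
   L even and w_i + w_{L+1-i} = 1 for all i. *)
Definition antipalindromic (n : nat) : Prop :=
  let w := binary n in
  let L := size w in
  0 < n /\ ~~ odd L /\
  forall i, i < L -> nth 0 w i + nth 0 w (L.-1 - i) = 1.

From mathcomp Require Import all_boot.
From mathcomp Require Import zify.

(* Multiplying by 2^m appends m zero digits, so the binary length grows by m.
   Antipalindromic numbers have even length; hence if A = 2^m B with A, B
   antipalindromic then m is even, and no odd power of 2 is such a quotient. *)

Lemma bin_lsb_aux_fuel f g n : n <= f -> n <= g ->
  bin_lsb_aux f n = bin_lsb_aux g n.
Proof.
elim: f g n => [|f IHf] [|g] n /= nf ng //.
- by move: nf; rewrite leqn0 => /eqP ->.
- by move: ng; rewrite leqn0 => /eqP ->.
- case: eqP => // /eqP n_neq0; congr (_ :: _).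
  have half_lt : n %/ 2 < n by rewrite ltn_Pdiv // lt0n.
  by apply: IHf; lia.
Qed.

Lemma size_binary_double n : 0 < n ->
  size (binary (2 * n)) = (size (binary n)).+1.
Proof.
move=> n_gt0; rewrite /binary !size_rev.
rewrite -(prednK (_ : 0 < 2 * n)) ?muln_gt0 //= prednK ?muln_gt0 //.
by rewrite mulKn // (@bin_lsb_aux_fuel _ n) //; lia.
Qed.

Lemma size_binary_pow2_mul m n : 0 < n ->
  size (binary (2 ^ m * n)) = size (binary n) + m.
Proof.
move=> n_gt0; elim: m => [|m IHm]; first by rewrite mul1n addn0.
by rewrite expnS -mulnA size_binary_double ?IHm ?addnS // muln_gt0 expn_gt0.
Qed.

Lemma antipalindromic_pow2_mul m n :
  antipalindromic n -> antipalindromic (2 ^ m * n) -> ~~ odd m.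
Proof.
move=> [n_gt0 [even_n _]] [_ [even_2mn _]].
by move: even_2mn; rewrite size_binary_pow2_mul // oddD (negbTE even_n).
Qed.

Theorem theorem17 :
  forall M : nat, exists N : nat, M < N /\
    ~ (exists A B : nat, antipalindromic A /\ antipalindromic B /\ A = N * B).
Proof.
move=> M; exists (2 ^ (2 * M).+1); split.
  by apply: leq_trans (ltn_expl _ (isT : 1 < 2)); lia.
move=> [A [B [antiA [antiB A_eq]]]].
move: antiA; rewrite A_eq => /(antipalindromic_pow2_mul _ _ antiB).
by rewrite oddS mul2n odd_double.
Qed.
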